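(* Let $(D(t),\,t\ge0)$ be a random nonnegative demand process (with locally integrable paths), let the initial energy configuration be given, and let $T\in(0,\infty]$. The GGDDF policy is non-anticipatory: its rates at each time $t$ depend only on $D(t)$ and on the current stored energies $(E_i(t),\,i\in\mathcal S)$. Moreover, for every discharge-only policy $\pi$ that is non-anticipatory (its rates at time $t$ depend only on $(D(s),\,s\le t)$), the unserved energy $U_{\mathrm{GGDDF}}$ over $[0,T]$ under GGDDF satisfies $U_{\mathrm{GGDDF}}\le U_\pi$ almost surely; consequently GGDDF minimises the expectation of the unserved energy over $[0,T]$ and, for every $q\in(0,1)$, the $q$-quantile of its distribution, among all such policies.
   Context: A finite set $\mathcal S$ of energy stores is given. Store $i\in\mathcal S$ has capacity $\overline E_i>0$ and maximum discharge rate $P_i>0$. A (discharge-only) policy is a choice of measurable rate functions $(r_i(t),\,t\ge0)$, $i\in\mathcal S$, with stored energies $E_i(t)=E_i(0)-\int_0^t r_i(u)\,du$, subject to $0\le E_i(t)\le\overline E_i$, $0\le r_i(t)\le P_i$ and $\sum_{i\in\mathcal S}r_i(t)\le d(t)$ for all $t\ge0$, where $(d(t),\,t\ge0)$ is a nonnegative demand function. The unserved energy over $[0,T]$ is $\int_0^T\max\bigl(d(t)-\sum_{i}r_i(t),0\bigr)dt$. GGDDF (greedy greatest-discharge-duration-first) policy: at (almost) every time $t$, the total served rate is $\bar d(t)=\min\bigl(d(t),\sum_{i:E_i(t)>0}P_i\bigr)$, and it is allocated as follows: the nonempty stores are partitioned into groups $G_1,G_2,\dots$ of equal discharge-duration $E_i(t)/P_i$,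 listed in strictly decreasing order of that duration; letting $m$ be the least index with $\sum_{k\le m}\sum_{i\in G_k}P_i\ge\bar d(t)$, every store in $G_k$ with $k<m$ discharges at rate $P_i$, every store $i\in G_m$ discharges at rate $\lambda P_i$ with $\lambda\in(0,1]$ chosen so that $\sum_i r_i(t)=\bar d(t)$, and all other stores have rate $0$ (all rates are $0$ if $\bar d(t)=0$). *)

From HB Require Import structures.
From mathcomp Require Import all_boot all_order all_algebra.
From mathcomp Require Import all_classical all_reals all_analysis measurable_realfun.
Set Implicit Arguments. Unset Strict Implicit. Unset Printing Implicit Defensive.
Import Order.TTheory GRing.Theory Num.Theory.
Import numFieldNormedType.Exports.
Local Open Scope classical_set_scope.
Local Open Scope ring_scope.

Section Model.
Variables (R : realType) (S : finType).
Variables (Ebar P : S -> R).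
Variable E0 : S -> R.

Definition energy (r : S -> R -> R) (i : S) (t : R) : R :=
  E0 i - (\int[@lebesgue_measure R]_(u in `[0, t]) r i u).

Definition is_policy (d : R -> R) (r : S -> R -> R) : Prop :=
  (forall i, measurable_fun [set t : R | 0 <= t] (r i)) /\
  (forall t, 0 <= t ->
     [/\ forall i, 0 <= energy r i t <= Ebar i,
         forall i, 0 <= r i t <= P i &
         \sum_i r i t <= d t]).

Definition served_rate (dt : R) (E : S -> R) : R :=
  Num.min dt (\sum_(i | 0 < E i) P i).

(* the GGDDF allocation rule at one time instant, given the demand value dt
   and the stored energies E; the groups G_1, G_2, ... are the level sets of
   the discharge duration E i / P i among nonempty stores; G_m is the level
   set of duration tau, and G_1..G_{m-1} are the nonempty stores with
   strictly greater duration. *)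
Definition ggddf_alloc (dt : R) (E : S -> R) (r : S -> R) : Prop :=
  let db := served_rate dt E in
  if db == 0 then forall i, r i = 0 else
  exists tau lambda,
    [/\ exists j, 0 < E j /\ E j / P j = tau,
        0 < lambda <= 1,
        \sum_(i | (0 < E i) && (tau < E i / P i)) P i < db
          <= \sum_(i | (0 < E i) && (tau <= E i / P i)) P i,
        forall i, r i = (if (0 < E i) && (tau < E i / P i) then P i
                         else if (0 < E i) && (E i / P i == tau)
                              then lambda * P i else 0) &
        \sum_i r i = db].

Definition is_ggddf (d : R -> R) (r : S -> R -> R) : Prop :=
  is_policy d r /\
  {ae @lebesgue_measure R, forall t, 0 <= t ->
      ggddf_alloc (d t) (energy r ^~ t) (r ^~ t)}.

Definition window (T : \bar R) : set R := [set t | 0 <= t /\ (t%:E <= T)%E].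

Definition unserved (d : R -> R) (r : S -> R -> R) (T : \bar R) : \bar R :=
  (\int[@lebesgue_measure R]_(t in window T)
      (Num.max (d t - \sum_i r i t) 0)%:E)%E.
End Model.

(* lower q-quantile of an extended-real random variable X:
   inf { x in R | P[X <= x] >= q } (= +oo if that set is empty) *)
Definition quantile (R : realType) (d : measure_display) (Om : measurableType d)
  (Pr : probability Om R) (X : Om -> \bar R) (q : R) : \bar R :=
  ereal_inf [set x%:E | x in [set x : R | (q%:E <= Pr [set w | (X w <= x%:E)%E])%E]].

From HB Require Import structures.
From mathcomp Require Import all_boot all_order all_algebra.
From mathcomp Require Import all_classical all_reals all_analysis measurable_realfun.
From mathcomp Require Import ring lra.
Import Order.TTheory GRing.Theory Num.Theory.
Import numFieldNormedType.Exports.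
Local Open Scope classical_set_scope.
Local Open Scope ring_scope.
Set Implicit Arguments. Unset Strict Implicit.

(* The allocation rule is a well-defined feedback law: for every demand value
   and energy vector the threshold group G_m and the fraction lambda are
   uniquely determined, so GGDDF depends only on D(t) and E(t).

   Optimality holds pathwise, against every feasible policy p.  On [0, t0]
   unserved energy is demand minus delivered energy, so it suffices that
   GGDDF delivers the most.  The key dynamic fact is that GGDDF preserves the
   order of discharge durations: a store emptied by time t0 had, at all
   earlier times, a strictly smaller duration than every store still
   nonempty at t0.  Hence, at times where some surviving store is below full
   power, GGDDF serves the whole demand and leaves the emptied stores idle.
   Splitting [0, t0] accordingly shows that GGDDF delivers exactly
     sum of E0 over emptied stores + sum of P |saturated| over the others
     + demand on the unsaturated times,
   which bounds the delivery of any feasible policy.  The infinite horizon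
   follows by monotone convergence; expectation and quantile statements follow
   from the pathwise inequality. *)

Section Intervals.
Variable R : realType.
Local Notation mu := (@lebesgue_measure R).

Lemma measurable_nonneg : measurable [set t : R | 0 <= t].
Proof.
have -> : [set t : R | 0 <= t] = `[0, +oo[%classic.
  by apply/seteqP; split => x /=; rewrite in_itv /= andbT.
exact: measurable_itv.
Qed.

Lemma itv_cc_nonneg (a b : R) : 0 <= a -> `[a, b]%classic `<=` [set t : R | 0 <= t].
Proof. by move=> a0 x /=; rewrite in_itv /= => /andP[ax _]; apply: le_trans ax. Qed.

Lemma itv_oc_nonneg (a b : R) : 0 <= a -> `]a, b]%classic `<=` [set t : R | 0 <= t].
Proof. by move=> a0 x /=; rewrite in_itv /= => /andP[ax _]; apply: le_trans (ltW ax). Qed.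

Lemma bounded_itv_finite (a b : R) (la lb : bool) :
  (mu [set` Interval (BSide la a) (BSide lb b)] < +oo)%E.
Proof. by rewrite lebesgue_measure_itv; case: ifP => //= _; rewrite -EFinD ltry. Qed.

Lemma lebesgue_oc_length (s t : R) : s <= t -> fine (mu `]s, t]%classic) = t - s.
Proof.
rewrite lebesgue_measure_itv /= lte_fin le_eqVlt => /predU1P[->|->//].
by rewrite ltxx subrr.
Qed.
End Intervals.

Section PolicyBasics.
Variables (R : realType) (S : finType) (Ebar P E0 : S -> R).
Local Notation mu := (@lebesgue_measure R).
Variables (d : R -> R) (q : S -> R -> R).
Hypothesis hq : is_policy Ebar P E0 d q.

Lemma policy_rate_ge0 i t : 0 <= t -> 0 <= q i t.
Proof. by move=> t0; have [_ /(_ i) /andP[]] := hq.2 t t0. Qed.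

Lemma policy_rate_le i t : 0 <= t -> q i t <= P i.
Proof. by move=> t0; have [_ /(_ i) /andP[]] := hq.2 t t0. Qed.

Lemma policy_energy_ge0 i t : 0 <= t -> 0 <= energy E0 q i t.
Proof. by move=> t0; have [/(_ i) /andP[]] := hq.2 t t0. Qed.

Lemma policy_measurable i (A : set R) :
  A `<=` [set t | 0 <= t] -> measurable_fun A (q i).
Proof. by move=> A0; apply: measurable_funS (hq.1 i) => //; exact: measurable_nonneg. Qed.

(* rates are bounded by P i, hence integrable on sets of finite measure *)
Lemma policy_integrable i (A : set R) : measurable A ->
  A `<=` [set t : R | 0 <= t] -> (mu A < +oo)%E -> mu.-integrable A (EFin \o q i).
Proof.
move=> mA A0 Afin; apply: measurable_bounded_integrable => //.
  exact: policy_measurable.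
exists (P i); split; first exact: num_real.
move=> M PM x Ax /=; rewrite ger0_norm ?policy_rate_ge0 ?(A0 x Ax) //.
by apply: le_trans (ltW PM); apply: policy_rate_le; exact: A0.
Qed.

Lemma policy_integrable_cc i (a b : R) : 0 <= a ->
  mu.-integrable `[a, b]%classic (EFin \o q i).
Proof.
move=> a0; apply: policy_integrable => //; first exact: itv_cc_nonneg.
exact: bounded_itv_finite.
Qed.

Lemma policy_integrable_oc i (a b : R) : 0 <= a ->
  mu.-integrable `]a, b]%classic (EFin \o q i).
Proof.
move=> a0; apply: policy_integrable => //; first exact: itv_oc_nonneg.
exact: bounded_itv_finite.
Qed.

Lemma energy_drop i (s t : R) : 0 <= s <= t ->
  energy E0 q i s - energy E0 q i t = \int[mu]_(u in `]s, t]) q i u.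
Proof.
move=> /andP[s0 st]; rewrite /energy opprB addrC addrA addrNK.
rewrite (@Rintegral_itvB _ _ (BLeft 0) (BRight t) s) //.
exact: policy_integrable_cc.
Qed.

Lemma energy_drop_bound i (s t : R) : 0 <= s <= t ->
  0 <= energy E0 q i s - energy E0 q i t <= P i * (t - s).
Proof.
move=> /[dup] /andP[s0 st] sst; rewrite energy_drop //; apply/andP; split.
  apply: Rintegral_ge0 => x /itv_oc_nonneg -/(_ s0) x0; exact: policy_rate_ge0.
apply: le_trans (_ : \int[mu]_(u in `]s, t]) P i <= _).
  apply: le_Rintegral => //; first exact: policy_integrable_oc.
  - apply: measurable_bounded_integrable => //; last exact: bounded_cst.
    exact: bounded_itv_finite.
  - by move=> x /itv_oc_nonneg -/(_ s0) x0; apply: policy_rate_le.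
by rewrite Rintegral_cst // lebesgue_oc_length.
Qed.

Lemma energy_nonincreasing i s t : 0 <= s <= t ->
  energy E0 q i t <= energy E0 q i s.
Proof. by move=> /(energy_drop_bound i) /andP[]; rewrite subr_ge0. Qed.

End PolicyBasics.

Section Allocation.
Variables (R : realType) (S : finType) (P : S -> R).
Hypothesis hP : forall i, 0 < P i.

Local Notation dur E i := (E i / P i).

Lemma sumP_ge0 (Q : pred S) : 0 <= \sum_(i | Q i) P i.
Proof. by apply: sumr_ge0 => i _; apply: ltW. Qed.

Lemma sumP_sub (Q1 Q2 : pred S) : (forall i, Q1 i -> Q2 i) ->
  \sum_(i | Q1 i) P i <= \sum_(i | Q2 i) P i.
Proof.
move=> H; rewrite [leRHS](bigID Q1) /=.
rewrite (eq_bigl Q1); last by move=> i; apply/andP/idP => [[]//|h]; split=> //; exact: H.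
by rewrite lerDl sumP_ge0.
Qed.

Lemma sumP_pos (Q : pred S) : 0 < \sum_(i | Q i) P i -> exists i, Q i.
Proof.
move=> h; case: (pickP Q) => [i Qi|Q0]; first by exists i.
by move: h; rewrite big_pred0 // ltxx.
Qed.

Lemma sumP_level_pos (E : S -> R) j :
  0 < E j -> 0 < \sum_(i | (0 < E i) && (dur E i == dur E j)) P i.
Proof.
move=> Ej; rewrite (bigD1 j) /=; last by rewrite Ej eqxx.
by rewrite ltr_pwDl ?hP // sumP_ge0.
Qed.

Lemma alloc_sum (E : S -> R) tau l :
  \sum_i (if (0 < E i) && (tau < dur E i) then P i
          else if (0 < E i) && (dur E i == tau) then l * P i else 0) =
  \sum_(i | (0 < E i) && (tau < dur E i)) P i
    + l * \sum_(i | (0 < E i) && (dur E i == tau)) P i.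
Proof.
rewrite (bigID (fun i => (0 < E i) && (tau < dur E i))) /=; congr (_ + _).
  by apply: eq_bigr => i ->.
rewrite mulr_sumr [RHS](bigID (fun i => (0 < E i) && (tau < dur E i))) /=.
rewrite [X in _ = X + _]big1 ?add0r; last first.
  by move=> i /andP[/andP[_ /eqP ->] /andP[_]]; rewrite ltxx.
rewrite big_mkcond [RHS]big_mkcond /=; apply: eq_bigr => i _.
by case: (0 < E i) => //=; case: ltgtP.
Qed.

Lemma threshold_exists (E : S -> R) (db : R) :
  0 < db -> db <= \sum_(i | 0 < E i) P i ->
  exists2 k, 0 < E k &
    \sum_(i | (0 < E i) && (dur E k < dur E i)) P i < db
      <= \sum_(i | (0 < E i) && (dur E k <= dur E i)) P i.
Proof.
move=> db0 dbN.
pose J j := (0 < E j) && (db <= \sum_(i | (0 < E i) && (dur E j <= dur E i)) P i).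
have [j1 Ej1] := sumP_pos (lt_le_trans db0 dbN).
have [jm Ejm Hjm] := @arg_minP _ _ _ j1 (fun i => 0 < E i) (fun i => dur E i) Ej1.
have Jjm : J jm.
  rewrite /J Ejm /=; apply: (le_trans dbN); apply: sumP_sub => i Ei.
  by rewrite Ei Hjm.
have [k /andP[Ek dbk] Hk] := @arg_maxP _ _ _ jm J (fun i => dur E i) Jjm.
exists k => //; rewrite dbk andbT ltNge; apply/negP => hge.
have [k1 Ek1] := sumP_pos (lt_le_trans db0 hge).
have [m /andP[Em km] Hm] := @arg_minP _ _ _ k1
  (fun i => (0 < E i) && (dur E k < dur E i)) (fun i => dur E i) Ek1.
have Jm : J m.
  rewrite /J Em /=; apply: (le_trans hge); apply: sumP_sub => i /andP[Ei ki].
  by rewrite Ei Hm // Ei ki.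
by have := Hk m Jm; rewrite /= leNgt km.
Qed.

(* the rule is realisable: put lambda = (db - power above tau) / power at tau *)
Lemma alloc_exists dt (E : S -> R) : 0 <= dt -> exists r, ggddf_alloc P dt E r.
Proof.
move=> dt0; rewrite /ggddf_alloc /=; set db := served_rate P dt E.
case: eqP => [_|/eqP db_neq0]; first by exists (fun _ => 0).
have db_gt0 : 0 < db by rewrite lt_neqAle eq_sym db_neq0 le_min dt0 sumP_ge0.
have dbN : db <= \sum_(i | 0 < E i) P i by rewrite ge_min lexx orbT.
have [k Ek /andP[gt_db db_ge]] := threshold_exists db_gt0 dbN.
pose sg := \sum_(i | (0 < E i) && (dur E k < dur E i)) P i.
pose se := \sum_(i | (0 < E i) && (dur E i == dur E k)) P i.
have ge_split : \sum_(i | (0 < E i) && (dur E k <= dur E i)) P i = sg + se.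
  rewrite (bigID (fun i => dur E k < dur E i)) /=.
  by congr (_ + _); apply: eq_bigl => i;
    case: (ltgtP (dur E k) (dur E i)); rewrite ?andbT ?andbF ?eqxx.
have se_gt0 : 0 < se := sumP_level_pos Ek.
pose l := (db - sg) / se.
exists (fun i => if (0 < E i) && (dur E k < dur E i) then P i
            else if (0 < E i) && (dur E i == dur E k) then l * P i else 0).
exists (dur E k), l; split => //.
- by exists k.
- rewrite divr_gt0 ?subr_gt0 //= ler_pdivrMr // mul1r lerBlDl.
  by rewrite -ge_split.
- by rewrite gt_db.
- by rewrite alloc_sum -/sg -/se mulfVK ?subrKC // gt_eqF.
Qed.

(* the rule determines the rates: the threshold tau and then lambda are forced *)
Lemma alloc_unique dt (E : S -> R) r r' :
  ggddf_alloc P dt E r -> ggddf_alloc P dt E r' -> forall i, r i = r' i.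
Proof.
rewrite /ggddf_alloc /=; set db := served_rate P dt E.
case: eqP => [_ h h' i|_]; first by rewrite h h'.
move=> [t [l [[j [Ej tj]] _ /andP[gt ge] hr sr]]].
move=> [t' [l' [_ _ /andP[gt' ge'] hr' sr']]].
have tt' : t = t'.
  have notlt a b : \sum_(i | (0 < E i) && (a < dur E i)) P i < db ->
      db <= \sum_(i | (0 < E i) && (b <= dur E i)) P i -> ~ a < b.
    move=> lt_a le_b ab; have := lt_le_trans lt_a le_b; rewrite ltNge.
    by rewrite sumP_sub // => i /andP[-> /(lt_le_trans ab)].
  by apply/eqP; rewrite eq_le !leNgt; apply/andP; split; apply/negP;
    [exact: notlt gt' ge | exact: notlt gt ge'].
subst t'; have se_gt0 := sumP_level_pos Ej; rewrite tj in se_gt0.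
have sum_of l0 r0 : (forall i, r0 i = (if (0 < E i) && (t < dur E i) then P i
      else if (0 < E i) && (dur E i == t) then l0 * P i else 0)) ->
    \sum_i r0 i = \sum_(i | (0 < E i) && (t < dur E i)) P i
      + l0 * \sum_(i | (0 < E i) && (dur E i == t)) P i.
  by move=> hr0; rewrite (eq_bigr _ (fun i _ => hr0 i)) alloc_sum.
have ll' : l = l'.
  have := sum_of _ _ hr; have := sum_of _ _ hr'; rewrite sr sr' => -> /addrI.
  by move/(mulIf (lt0r_neq0 se_gt0)).
by move=> i; rewrite hr hr' ll'.
Qed.

Lemma alloc_empty dt (E r : S -> R) i :
  ggddf_alloc P dt E r -> ~~ (0 < E i) -> r i = 0.
Proof.
rewrite /ggddf_alloc /=; case: eqP => [_ h _|_]; first exact: h.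
by move=> [t [l [_ _ _ hr _]]] /negbTE Ei; rewrite hr Ei.
Qed.

Lemma alloc_total dt (E r : S -> R) :
  ggddf_alloc P dt E r -> \sum_i r i = served_rate P dt E.
Proof.
rewrite /ggddf_alloc /=; case: eqP => [/eqP /eqP -> h|_]; first by rewrite big1.
by move=> [t [l [_ _ _ _ ->]]].
Qed.

Lemma alloc_full dt (E r : S -> R) i j : ggddf_alloc P dt E r ->
  0 < r i -> 0 < E j -> dur E i < dur E j -> r j = P j.
Proof.
rewrite /ggddf_alloc /=; case: eqP => [_ h|_]; first by rewrite h ltxx.
move=> [t [l [_ _ _ hr _]]] ri Ej tij.
rewrite hr Ej /=; case: ifP => // /negbT; rewrite -leNgt => tjt.
move: ri; rewrite hr; case: ifP => [/andP[_ ti]|_].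
  by have := lt_le_trans (lt_trans ti tij) tjt; rewrite ltxx.
case: ifP => [/andP[_ /eqP ti]|_]; last by rewrite ltxx.
by move: tij; rewrite ti ltNge tjt.
Qed.

Lemma alloc_serves_demand dt (E r : S -> R) j : ggddf_alloc P dt E r ->
  (forall i, r i <= P i) -> 0 < E j -> r j != P j -> \sum_i r i = dt.
Proof.
move=> ha rP Ej rj; have := alloc_total ha; rewrite /served_rate.
case: leP => [_ -> //|_ hs]; exfalso; move/negP: rj; apply; apply/eqP.
have : \sum_(i | 0 < E i) (P i - r i) = 0.
  rewrite sumrB -hs [X in X - _](bigID (fun i => 0 < E i)) /=.
  rewrite [X in _ + X - _]big1 ?addr0 ?subrr // => i /negbTE Ei.
  by apply: (alloc_empty ha); rewrite Ei.
move/eqP; rewrite psumr_eq0 => [/allP /(_ j (mem_index_enum _))|i _].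
  by rewrite Ej /= subr_eq0 => /eqP.
by rewrite subr_ge0.
Qed.
End Allocation.

Lemma le_Rintegral_ae (R : realType) d (T : measurableType d)
    (mu : {measure set T -> \bar R}) (D : set T) (f g : T -> R) :
  measurable D -> mu.-integrable D (EFin \o f) -> mu.-integrable D (EFin \o g) ->
  (forall x, D x -> 0 <= f x) -> (forall x, D x -> 0 <= g x) ->
  {ae mu, forall x, D x -> f x <= g x} ->
  \int[mu]_(x in D) f x <= \int[mu]_(x in D) g x.
Proof.
move=> mD intf intg f0 g0 fg.
rewrite /Rintegral fine_le ?(integrable_fin_num mD) //.
apply: (ae_ge0_le_integral mD _ (measurable_int _ intf) _ (measurable_int _ intg)).
- by move=> x Dx /=; rewrite lee_fin f0.
- by move=> x Dx /=; rewrite lee_fin g0.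
by apply: filterS fg => x fgx Dx; rewrite lee_fin fgx.
Qed.

Lemma duration_drop_bound (R : realType) (S : finType) (Ebar P E0 : S -> R)
    (d : R -> R) (q : S -> R -> R) i s t :
  0 < P i -> is_policy Ebar P E0 d q -> 0 <= s <= t ->
  0 <= energy E0 q i s / P i - energy E0 q i t / P i <= t - s.
Proof.
move=> Pi hq /(energy_drop_bound hq i) /andP[h1 h2]; rewrite -mulrBl.
apply/andP; split; first by rewrite divr_ge0 // ltW.
by rewrite ler_pdivrMr // mulrC.
Qed.

Section OrderPreservation.
Variables (R : realType) (S : finType) (Ebar P E0 : S -> R).
Hypothesis hP : forall i, 0 < P i.
Local Notation mu := (@lebesgue_measure R).
Variables (d : R -> R) (r : S -> R -> R).
Hypothesis hr : is_ggddf Ebar P E0 d r.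
Local Notation E := (energy E0 r).
Local Notation dur i u := (E i u / P i).

Lemma duration_gap_drop i j s v : 0 <= s <= v ->
  (dur i s - dur j s) - (dur i v - dur j v) =
  \int[mu]_(u in `]s, v]) (r i u / P i) - \int[mu]_(u in `]s, v]) (r j u / P j).
Proof.
move=> /[dup] sv /andP[s0 _].
have drop k : dur k s - dur k v = \int[mu]_(u in `]s, v]) (r k u / P k).
  rewrite -mulrBl (energy_drop hr.1 k sv) RintegralZr //.
  exact/(policy_integrable_oc hr.1 k v s0).
by rewrite -(drop i) -(drop j); ring.
Qed.

(* While i stays strictly below j in duration and j stays nonempty, j runs
   at full power whenever i is discharged, so the gap cannot shrink. *)
Lemma duration_gap_nondecreasing i j s v : 0 <= s <= v -> 0 < E j v ->
  (forall u, s < u <= v -> dur i u < dur j u) ->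
  dur i s - dur j s <= dur i v - dur j v.
Proof.
move=> /[dup] sv /andP[s0 _] Ejv hlt.
rewrite -subr_le0 duration_gap_drop // subr_le0.
have u0 u : `]s, v]%classic u -> 0 <= u by move/itv_oc_nonneg; apply.
have rP_int k : mu.-integrable `]s, v]%classic (EFin \o (fun u => r k u / P k)).
  have := integrableZr (mu := mu) (measurable_itv _) (P k)^-1
    (policy_integrable_oc hr.1 k v s0).
  by apply: eq_integrable => // u _; rewrite /= EFinM.
apply: le_Rintegral_ae => //.
- by move=> u /u0 u_ge0; rewrite divr_ge0 ?(policy_rate_ge0 hr.1) // ltW.
- by move=> u /u0 u_ge0; rewrite divr_ge0 ?(policy_rate_ge0 hr.1) // ltW.
have ae_filter := ae_filter_ringOfSetsType mu.
apply: filterS hr.2 => u ha /[dup] /u0 u_ge0.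
rewrite /= in_itv /= => /andP[su uv].
have {}ha := ha u_ge0.
have [ri0|ri_neq0] := eqVneq (r i u) 0.
  by rewrite ri0 mul0r divr_ge0 ?(policy_rate_ge0 hr.1) // ltW.
have rj : r j u = P j.
  apply: (alloc_full ha (i := i)).
  - by rewrite lt_neqAle eq_sym ri_neq0 (policy_rate_ge0 hr.1).
  - apply: (lt_le_trans Ejv); apply: (energy_nonincreasing hr.1).
    by rewrite u_ge0 uv.
  - by apply: hlt; rewrite su uv.
rewrite rj divff ?gt_eqF ?hP //.
by rewrite ler_pdivrMr // mul1r (policy_rate_le hr.1).
Qed.

(* Proof by contradiction: at s, the last time in [t, T] with i not below j,
   the gap is still nonnegative (durations are 1-Lipschitz), and after s it
   cannot decrease, contradicting gap T < 0. *)
Lemma duration_order_preserved i j t T : 0 <= t <= T -> E i T <= 0 -> 0 < E j T ->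
  dur i t < dur j t.
Proof.
move=> /andP[t0 tT] EiT EjT.
pose gap u := dur i u - dur j u.
rewrite -subr_lt0 -/(gap t) ltNge; apply/negP => gap_t.
have gap_T : gap T < 0.
  rewrite /gap subr_lt0 (@le_lt_trans _ _ 0) ?divr_gt0 //.
  by rewrite mulr_le0_ge0 // invr_ge0 ltW.
pose Z := [set u | t <= u <= T /\ 0 <= gap u].
have Zt : Z t by split => //; rewrite lexx tT.
have hs : has_sup Z by split; [exists t | exists T => u [/andP[_ ->]]].
pose s := sup Z.
have ts : t <= s by apply: sup_upper_bound.
have sT : s <= T by apply: ge_sup => //; [exists t | move=> u [/andP[_ ->]]].
have s0 : 0 <= s by apply: le_trans ts.
have gap_s : 0 <= gap s.
  rewrite leNgt; apply/negP => gap_s_neg.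
  have eta0 : 0 < - gap s / 2 by rewrite divr_gt0 // oppr_gt0.
  have [u Zu hu] := sup_adherent eta0 hs.
  have [/andP[tu uT] gap_u] := Zu.
  have us : 0 <= u <= s by rewrite (le_trans t0 tu) sup_upper_bound.
  have := duration_drop_bound (hP i) hr.1 us.
  have := duration_drop_bound (hP j) hr.1 us.
  move: gap_u gap_s_neg hu; rewrite /gap -/s.
  set a := dur i u; set b := dur j u; set c := dur i s; set e := dur j s.
  lra.
have after_s u : s < u <= T -> dur i u < dur j u.
  move=> /andP[su uT]; rewrite -subr_lt0 -/(gap u) ltNge; apply/negP => gap_u.
  have Zu : Z u by split => //; rewrite uT andbT (le_trans ts (ltW su)).
  by have := sup_upper_bound hs Zu; rewrite leNgt su.
have := duration_gap_nondecreasing (i := i) (j := j) (s := s) (v := T).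
by rewrite s0 sT EjT => /(_ isT isT after_s); rewrite -/(gap s) -/(gap T); lra.
Qed.
End OrderPreservation.

Section Delivery.
Variables (R : realType) (S : finType) (Ebar P E0 : S -> R).
Local Notation mu := (@lebesgue_measure R).
Variable d : R -> R.
Hypothesis hdint : forall t, 0 <= t -> mu.-integrable `[0, t]%classic (fun s => (d s)%:E).
Variable q : S -> R -> R.
Hypothesis hq : is_policy Ebar P E0 d q.

Lemma window_fin (t0 : R) : window t0%:E = `[0, t0]%classic.
Proof.
apply/seteqP; split => x /=; rewrite /window /= in_itv /=.
  by move=> [-> xt]; rewrite -lee_fin.
by move=> /andP[x0 xt]; split => //; rewrite lee_fin.
Qed.

Lemma demand_measurable (t0 : R) : 0 <= t0 -> measurable_fun `[0, t0]%classic d.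
Proof.
move=> t00; have := measurable_int mu (hdint t00).
by move/measurable_EFinP.
Qed.

Lemma policy_emeasurable k (A : set R) : A `<=` [set t | 0 <= t] ->
  measurable_fun A (fun x => (q k x)%:E).
Proof. by move=> A0; apply/measurable_EFinP; apply: (policy_measurable hq). Qed.

Lemma policy_erate_ge0 k (A : set R) : A `<=` [set t | 0 <= t] ->
  forall x, A x -> (0 <= (q k x)%:E)%E.
Proof. by move=> A0 x /A0 x0; rewrite lee_fin (policy_rate_ge0 hq). Qed.

Lemma delivered_sum (A : set R) : measurable A -> A `<=` [set t | 0 <= t] ->
  (\sum_k \int[mu]_(x in A) (q k x)%:E = \int[mu]_(x in A) (\sum_k q k x)%:E)%E.
Proof.
move=> mA A0; rewrite -ge0_integral_sum //.
- by apply: eq_integral => x _; rewrite sumEFin.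
- by move=> k; apply: policy_emeasurable.
- by move=> k; apply: policy_erate_ge0.
Qed.

Lemma delivered_energy (k : S) (t0 : R) : 0 <= t0 ->
  (\int[mu]_(x in `[0%R, t0]%classic) (q k x)%:E = (E0 k - energy E0 q k t0)%:E)%E.
Proof.
move=> t00; rewrite /energy opprB addrC subrK /Rintegral fineK //.
apply: (integrable_fin_num (mu := mu) (measurable_itv _)).
exact: (policy_integrable_cc hq k t0 (lexx 0)).
Qed.

Lemma delivered_le_initial k (t0 : R) (A : set R) : 0 <= t0 -> measurable A ->
  A `<=` `[0, t0]%classic -> (\int[mu]_(x in A) (q k x)%:E <= (E0 k)%:E)%E.
Proof.
move=> t00 mA AW; have W0 := itv_cc_nonneg (b := t0) (lexx 0).
apply: (le_trans (ge0_subset_integral mu mA (measurable_itv _)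
  (policy_emeasurable k W0) (policy_erate_ge0 k W0) AW)).
by rewrite delivered_energy // lee_fin lerBlDr lerDl (policy_energy_ge0 hq).
Qed.

Lemma delivered_le_rate k (A : set R) : measurable A -> A `<=` [set t | 0 <= t] ->
  (\int[mu]_(x in A) (q k x)%:E <= (P k)%:E * mu A)%E.
Proof.
move=> mA A0; rewrite -integral_cst //; apply: ge0_le_integral => //.
- exact: policy_erate_ge0.
- exact: policy_emeasurable.
- by move=> x /A0 x0; rewrite lee_fin (policy_rate_le hq).
Qed.

Lemma delivered_le_demand (t0 : R) (B : set R) : 0 <= t0 -> measurable B ->
  B `<=` `[0, t0]%classic ->
  (\sum_k \int[mu]_(x in B) (q k x)%:E <= \int[mu]_(x in B) (d x)%:E)%E.
Proof.
move=> t00 mB BW.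
have B0 : B `<=` [set t | 0 <= t] by move=> x /BW; apply: itv_cc_nonneg.
rewrite delivered_sum //; apply: ge0_le_integral => //.
- by move=> x /B0 x0; rewrite lee_fin sumr_ge0 // => k _; apply: (policy_rate_ge0 hq).
- by apply/measurable_EFinP; apply: measurable_sum => k; apply: (policy_measurable hq).
- by apply/measurable_EFinP; apply: measurable_funS (demand_measurable t00).
- by move=> x /B0 x0; rewrite lee_fin; have [_ _ ->] := hq.2 x x0.
Qed.

Lemma unserved_split (t0 : R) : 0 <= t0 ->
  (unserved d q t0%:E + \sum_k \int[mu]_(x in `[0%R, t0]%classic) (q k x)%:E
     = \int[mu]_(x in `[0%R, t0]%classic) (d x)%:E)%E.
Proof.
move=> t00; have W0 := itv_cc_nonneg (b := t0) (lexx 0).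
rewrite /unserved window_fin delivered_sum // -ge0_integralD //.
- apply: eq_integral => x /[1!inE] /W0 x0; rewrite -EFinD.
  have [_ _ sd] := hq.2 x x0.
  by rewrite max_l ?subrK // subr_ge0.
- by move=> x _; rewrite lee_fin le_max lexx orbT.
- apply/measurable_EFinP; apply: measurable_maxr => //.
  apply: measurable_funB (demand_measurable t00) _.
  by apply: measurable_sum => k; apply: (policy_measurable hq).
- by move=> x /W0 x0; rewrite lee_fin sumr_ge0 // => k _; apply: (policy_rate_ge0 hq).
- by apply/measurable_EFinP; apply: measurable_sum => k; apply: (policy_measurable hq).
Qed.
End Delivery.

(* At unsaturated times GGDDF serves the whole demand
   and, by preservation of the duration order, leaves exhausted stores idle. *)
Section GGDDFDelivery.
Variables (R : realType) (S : finType) (Ebar P E0 : S -> R).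
Hypothesis hP : forall i, 0 < P i.
Local Notation mu := (@lebesgue_measure R).
Variable d : R -> R.
Hypothesis hd0 : forall t, 0 <= t -> 0 <= d t.
Hypothesis hdint : forall t, 0 <= t -> mu.-integrable `[0, t]%classic (fun s => (d s)%:E).
Variable r : S -> R -> R.
Hypothesis hr : is_ggddf Ebar P E0 d r.
Variable t0 : R.
Hypothesis ht0 : 0 <= t0.
Local Notation W := (`[0, t0]%classic : set R).

Definition exhausted (k : S) : bool := energy E0 r k t0 <= 0.

Definition shortfall (t : R) : R :=
  \sum_k (if exhausted k then 0 else P k - r k t).

Definition saturated : set R := W `&` shortfall @^-1` [set 0].
Definition unsaturated : set R := W `\` saturated.

Lemma window_nonneg : W `<=` [set t | 0 <= t].
Proof. exact: itv_cc_nonneg. Qed.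

Lemma unsaturated_nonneg : unsaturated `<=` [set t | 0 <= t].
Proof. by move=> t [/window_nonneg]. Qed.

Lemma saturated_measurable : measurable saturated.
Proof.
have m_shortfall : measurable_fun W shortfall.
  apply: measurable_sum => k; case: exhausted; first exact: measurable_cst.
  exact: measurable_funB (measurable_cst _) (policy_measurable hr.1 k window_nonneg).
exact: m_shortfall (measurable_itv _) _ (measurable_set1 0).
Qed.

Lemma unsaturated_measurable : measurable unsaturated.
Proof. exact: measurableD (measurable_itv _) saturated_measurable. Qed.

Lemma saturated_full t k : saturated t -> ~~ exhausted k -> r k t = P k.
Proof.
move=> [/window_nonneg t_ge0 /= /eqP]; rewrite psumr_eq0 => [|j _]; last first.
  by case: exhausted; rewrite // subr_ge0 (policy_rate_le hr.1).
move=> /allP /(_ k (mem_index_enum _)) /= + /negbTE exk.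
by rewrite exk subr_eq0 => /eqP.
Qed.

Lemma unsaturated_serves : {ae mu, forall t, unsaturated t ->
  \sum_k r k t = d t /\ forall k, exhausted k -> r k t = 0}.
Proof.
have ae_filter := ae_filter_ringOfSetsType mu.
apply: filterS hr.2 => t ha [Wt not_sat].
have t_ge0 := window_nonneg Wt; have {}ha := ha t_ge0.
have nonempty j : ~~ exhausted j -> 0 < energy E0 r j t.
  rewrite /exhausted -ltNge => Ej; apply: (lt_le_trans Ej).
  by apply: (energy_nonincreasing hr.1); move: Wt; rewrite /= in_itv.
have [j [exj rj]] : exists j, ~~ exhausted j /\ r j t != P j.
  apply: contrapT => all_full; apply: not_sat; split => //=.
  apply: big1 => j _; case: ifP => // /negbT exj.
  apply/eqP; rewrite subr_eq0 eq_sym; apply: contrapT => /negP rj.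
  by apply: all_full; exists j.
split.
  apply: (alloc_serves_demand ha) (nonempty j exj) rj => i.
  by apply: (policy_rate_le hr.1).
move=> k exk; apply/eqP; apply: contrapT => /negP rk.
have rk_gt0 : 0 < r k t by rewrite lt_neqAle eq_sym rk (policy_rate_ge0 hr.1).
apply: not_sat; split => //=; apply: big1 => i _; case: ifP => // /negbT exi.
rewrite (alloc_full ha rk_gt0 (nonempty i exi)) ?subrr //.
apply: (duration_order_preserved hP hr) exk _; first by move: Wt; rewrite /= in_itv.
by move: exi; rewrite /exhausted -ltNge.
Qed.

Definition delivery_bound : \bar R :=
  (\sum_k (if exhausted k then (E0 k)%:E else (P k)%:E * mu saturated)
    + \int[mu]_(x in unsaturated) (d x)%:E)%E.

Lemma delivered_split q (hq : is_policy Ebar P E0 d q) k :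
  (\int[mu]_(x in W) (q k x)%:E
    = \int[mu]_(x in saturated) (q k x)%:E + \int[mu]_(x in unsaturated) (q k x)%:E)%E.
Proof.
have W_split : W = saturated `|` unsaturated.
  by rewrite /unsaturated setDUK // => x [].
have disj : [disjoint saturated & unsaturated] by apply/disj_setPS => x [? []].
rewrite {1}W_split.
apply: (ge0_integral_setU mu saturated_measurable unsaturated_measurable) => //.
- by rewrite -W_split; apply: (policy_emeasurable hq); exact: window_nonneg.
- by rewrite -W_split; apply: (policy_erate_ge0 hq); exact: window_nonneg.
Qed.

(* on saturated times a surviving store runs at full power, while an
   exhausted store delivers all its energy there (it is idle elsewhere) *)
Lemma ggddf_delivered_saturated k :
  (\int[mu]_(x in saturated) (r k x)%:E
    = if exhausted k then (E0 k)%:E else (P k)%:E * mu saturated)%E.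
Proof.
case: ifP => exk; last first.
  rewrite -integral_cst; last exact: saturated_measurable.
  apply: eq_integral => x /[1!inE] sx.
  by rewrite (saturated_full sx) ?exk.
have idle : (\int[mu]_(x in unsaturated) (r k x)%:E = 0)%E.
  rewrite (ge0_ae_eq_integral (g := cst 0%E)) ?integral0 //.
  - exact: unsaturated_measurable.
  - by apply: (policy_emeasurable hr.1); exact: unsaturated_nonneg.
  - by apply: (policy_erate_ge0 hr.1); exact: unsaturated_nonneg.
  have ae_filter := ae_filter_ringOfSetsType mu.
  by apply: filterS unsaturated_serves => x h /h [_ ->].
have empty : energy E0 r k t0 = 0.
  by apply/eqP; rewrite eq_le (policy_energy_ge0 hr.1) // andbT; exact: exk.
have := delivered_split hr.1 k; rewrite idle adde0 => <-.
by rewrite (delivered_energy hr.1) // empty subr0.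
Qed.

Lemma ggddf_delivery :
  (\sum_k \int[mu]_(x in W) (r k x)%:E = delivery_bound)%E.
Proof.
under eq_bigr do rewrite (delivered_split hr.1).
rewrite big_split /= (delivered_sum hr.1 unsaturated_measurable unsaturated_nonneg).
under eq_bigr do rewrite ggddf_delivered_saturated.
congr (_ + _)%E; apply: ge0_ae_eq_integral.
- exact: unsaturated_measurable.
- apply/measurable_EFinP; apply: measurable_sum => k.
  by apply: (policy_measurable hr.1); exact: unsaturated_nonneg.
- apply/measurable_EFinP; apply: measurable_funS (demand_measurable hdint ht0) => //.
  by move=> x [].
- by move=> x /unsaturated_nonneg x0; rewrite lee_fin sumr_ge0 // => k _;
    apply: (policy_rate_ge0 hr.1).
- by move=> x /unsaturated_nonneg x0; rewrite lee_fin hd0.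
have ae_filter := ae_filter_ringOfSetsType mu.
by apply: filterS unsaturated_serves => x h /h [-> _].
Qed.

Lemma policy_delivery_le p (hp : is_policy Ebar P E0 d p) :
  (\sum_k \int[mu]_(x in W) (p k x)%:E <= delivery_bound)%E.
Proof.
have unsat_W : unsaturated `<=` W by move=> x [].
have sat_W : saturated `<=` W by move=> x [].
under eq_bigr do rewrite (delivered_split hp).
rewrite big_split /=; apply: leeD.
  apply: lee_sum => k _; case: exhausted.
    by apply: (delivered_le_initial hp k ht0 _ sat_W); exact: saturated_measurable.
  apply: (delivered_le_rate hp); first exact: saturated_measurable.
  by move=> x /sat_W /window_nonneg.
by apply: (delivered_le_demand hdint hp ht0 _ unsat_W); exact: unsaturated_measurable.
Qed.

Lemma delivery_bound_fin : delivery_bound \is a fin_num.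
Proof.
rewrite fin_numD; apply/andP; split.
  have sat_fin : mu saturated \is a fin_num.
    rewrite ge0_fin_numE ?measure_ge0 //.
    apply: le_lt_trans (bounded_itv_finite 0 t0 true false).
    by apply: le_measure; rewrite ?inE //; [exact: saturated_measurable | move=> x []].
  by apply/sum_fin_numP => k _ _; case: exhausted => //; rewrite fin_numM.
apply: (integrable_fin_num (mu := mu) unsaturated_measurable).
by apply: integrableS (hdint ht0) => //; [exact: unsaturated_measurable | move=> x []].
Qed.
End GGDDFDelivery.

(* No non-anticipation is needed
   for p: the comparison is against an arbitrary feasible discharge schedule. *)
Section Optimality.
Variables (R : realType) (S : finType) (Ebar P E0 : S -> R).
Hypothesis hP : forall i, 0 < P i.
Local Notation mu := (@lebesgue_measure R).
Variable d : R -> R.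
Hypothesis hd0 : forall t, 0 <= t -> 0 <= d t.
Hypothesis hdint : forall t, 0 <= t -> mu.-integrable `[0, t]%classic (fun s => (d s)%:E).
Variables (r p : S -> R -> R).
Hypothesis hr : is_ggddf Ebar P E0 d r.
Hypothesis hp : is_policy Ebar P E0 d p.

Lemma unserved_ge0 (q : S -> R -> R) (T : \bar R) : (0 <= unserved d q T)%E.
Proof. by apply: integral_ge0 => x _; rewrite lee_fin le_max lexx orbT. Qed.

(* finite horizon: unserved = demand - delivered, and GGDDF delivers most *)
Lemma ggddf_optimal_finite (t0 : R) : 0 <= t0 ->
  (unserved d r t0%:E <= unserved d p t0%:E)%E.
Proof.
move=> t00; have ur := unserved_split hdint hr.1 t00.
have up := unserved_split hdint hp t00.
rewrite (ggddf_delivery hP hd0 hdint hr t00) in ur.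
rewrite -(leeD2rE _ _ (delivery_bound_fin hdint hr t00)) ur -up.
by apply: leeD2l; apply: (policy_delivery_le hdint hr t00 hp).
Qed.

Lemma unserved_integrand_measurable q (hq : is_policy Ebar P E0 d q) (t0 : R) :
  0 <= t0 -> measurable_fun `[0%R, t0]%classic
    (fun x => (Num.max (d x - \sum_i q i x) 0)%:E).
Proof.
move=> t00; apply/measurable_EFinP; apply: measurable_maxr => //.
apply: measurable_funB (demand_measurable hdint t00) _.
apply: measurable_sum => k; apply: (policy_measurable hq).
exact: itv_cc_nonneg.
Qed.

(* infinite horizon: monotone convergence along the windows [0, n + 1] *)
Lemma ggddf_optimal_infinite : (unserved d r +oo <= unserved d p +oo)%E.
Proof.
pose F n : set R := `[0%R, n.+1%:R]%classic.
have F_nd : {homo F : n m / (n <= m)%N >-> (n <= m)%O}.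
  move=> n m nm; rewrite subsetEset => x; rewrite /F /= !in_itv /= => /andP[-> xn].
  by apply: (le_trans xn); rewrite ler_nat.
have mF n : measurable (F n) by exact: measurable_itv.
have F_cover : \bigcup_n F n = window +oo.
  apply/seteqP; split => x /=.
    by move=> [n _]; rewrite /F /= in_itv /= => /andP[x0 _]; split => //; rewrite leey.
  move=> [x0 _]; have [n xn] : exists n : nat, x <= n.+1%:R.
    by exists (Num.trunc x); apply: ltW; rewrite -truncn_lt_nat.
  by exists n => //; rewrite /F /= in_itv /= x0.
have cvg q (hq : is_policy Ebar P E0 d q) :=
  @ge0_nondecreasing_set_cvg_integral _ (measurableTypeR R) _ F
    (fun x => (Num.max (d x - \sum_i q i x) 0)%:E) mu F_nd mF
    (fun n => unserved_integrand_measurable hq (ler0n _ n.+1))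
    (fun n x _ => ltac:(by rewrite lee_fin le_max lexx orbT)).
rewrite /unserved -F_cover -(cvg_lim _ (cvg _ hr.1)) // -(cvg_lim _ (cvg _ hp)) //.
apply: lee_lim; [by apply/cvg_ex; eexists; exact: cvg _ hr.1 |
                 by apply/cvg_ex; eexists; exact: cvg _ hp |].
near=> n.
by have := ggddf_optimal_finite (ler0n _ n.+1); rewrite /unserved window_fin.
Unshelve. all: by end_near.
Qed.

Lemma ggddf_optimal T : (0 < T)%E -> (unserved d r T <= unserved d p T)%E.
Proof.
case: T => [t| |] // t_gt0; last exact: ggddf_optimal_infinite.
by apply: ggddf_optimal_finite; rewrite -lee_fin ltW.
Qed.
End Optimality.

Lemma quantile_le (R : realType) d (Om : measurableType d) (Pr : probability Om R)
    (X Y : Om -> \bar R) (q : R) :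
  measurable_fun setT X -> measurable_fun setT Y -> (forall w, (X w <= Y w)%E) ->
  (quantile Pr X q <= quantile Pr Y q)%E.
Proof.
move=> mX mY XY; apply: le_ereal_inf_tmp => _ [x qx <-].
apply: ereal_inf_lbound; exists x => //=; apply: le_trans qx _.
apply: le_measure; rewrite ?inE.
- by have := measurable_lee measurableT mY (measurable_cst x%:E); rewrite setTI.
- by have := measurable_lee measurableT mX (measurable_cst x%:E); rewrite setTI.
- by move=> w /= Yx; apply: le_trans (XY w) Yx.
Qed.

Unset Implicit Arguments.

Theorem corollary2 (R : realType) (S : finType) (Ebar P E0 : S -> R)
  (hEbar : forall i, 0 < Ebar i) (hP : forall i, 0 < P i)
  (hE0 : forall i, 0 <= E0 i <= Ebar i)
  (d : measure_display) (Om : measurableType d) (Pr : probability Om R)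
  (D : Om -> R -> R)
  (hDnn : forall w t, 0 <= t -> 0 <= D w t)
  (hDloc : forall w t, 0 <= t ->
     (@lebesgue_measure R).-integrable `[0, t] (fun s => (D w s)%:E))
  (T : \bar R) (hT : (0 < T)%E)
  (g : Om -> S -> R -> R)
  (hg : forall w, is_ggddf Ebar P E0 (D w) (g w)) :
  (forall (dt : R) (E : S -> R), 0 <= dt ->
     (exists r, ggddf_alloc P dt E r) /\
     (forall r r', ggddf_alloc P dt E r -> ggddf_alloc P dt E r' ->
        forall i, r i = r' i)) /\
  (forall pi : Om -> S -> R -> R,
     (forall w, is_policy Ebar P E0 (D w) (pi w)) ->
     (forall w w' t, 0 <= t ->
        (forall s, 0 <= s <= t -> D w s = D w' s) ->
        forall i, pi w i t = pi w' i t) ->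
     let UG := fun w => unserved (D w) (g w) T in
     let Upi := fun w => unserved (D w) (pi w) T in
     {ae Pr, forall w, (UG w <= Upi w)%E} /\
     (measurable_fun setT UG -> measurable_fun setT Upi ->
        (\int[Pr]_w UG w <= \int[Pr]_w Upi w)%E /\
        (forall q : R, 0 < q < 1 -> (quantile Pr UG q <= quantile Pr Upi q)%E))).
Proof.
split.
  by move=> dt E dt0; split; [apply: (alloc_exists hP) | apply: (alloc_unique hP)].
move=> pi hpi _ UG Upi.
have pathwise w : (UG w <= Upi w)%E.
  by apply: (ggddf_optimal hP (hDnn w) (hDloc w) (hg w) (hpi w)).
split; first exact: aeW.
move=> mUG mUpi; split; last by move=> q _; exact: quantile_le.
by apply: ge0_le_integral => // w _; exact: unserved_ge0.
Qed.
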